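(* There is a neighborhood $U\subset\mathbb C_n$ of the image of $\gamma_0$ such that at every point of $U$ one has $\mathcal D_n+[\mathcal D_n,\mathcal D_n]=T\mathbb C_n$. That is, $\mathcal D_n$ is completely non-integrable on $U$ with growth vector $(n,2n-1)$; the vector fields $\xi_i$ together with their first commutators span the tangent spaces of $\mathbb C_n$.
   Context: Let $n\ge3$ and let $\mathcal P_n$ be the $2n$-dimensional manifold of convex $n$-gons in $\mathbb R^2$. A polygon is encoded by its side lines, cyclically ordered counterclockwise (indices mod $n$): $L_i=\{x\cos\alpha_i+y\sin\alpha_i=p_i\}$, with $(\cos\alpha_i,\sin\alpha_i)$ the outer unit normal. The coordinates are $(\alpha_i,p_i)$, with $0<\alpha_{i+1}-\alpha_i<\pi$ and total turning $2\pi$. Let $\mathcal D_n$ be the distribution spanned by the vector fields $\xi_i=\partial_{\alpha_i}+\Phi_i\,\partial_{p_i}$, $i=1,\dots,n$, where $$\Phi_i=\frac{\cos^2\!\big(\frac{\alpha_i-\alpha_{i-1}}2\big)(p_{i+1}+p_i)-\cos^2\!\big(\frac{\alpha_{i+1}-\alpha_i}2\big)(p_{i-1}+p_i)}{2\sin\!\big(\frac{\alpha_{i+1}-\alpha_{i-1}}2\big)\cos\!\big(\frac{\alpha_i-\alpha_{i-1}}2\big)\cos\!\big(\frac{\alpha_{i+1}-\alpha_i}2\big)}.$$ Geometrically, $\xi_i$ is the infinitesimal counterclockwise rotation of $L_i$ about the point $C_i$ where $L_i$ touches the circle tangent to $L_{i-1},L_i,L_{i+1}$. That circle lies on the polygon's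 side of $L_{i\pm1}$ and on the opposite side of $L_i$. $\mathcal D_n$ is tangent to the level sets of the perimeter $F$. Let $\mathbb C_n=\{F=2n\tan(\pi/n)\}$, a $(2n-1)$-dimensional submanifold of $\mathcal P_n$ carrying the $n$-dimensional distribution $\mathcal D_n$. Let $\gamma_0:[0,1]\to\mathbb C_n$ be the family of regular $n$-gons circumscribed about the unit circle centered at the origin: $\alpha_i(t)=\frac{2\pi}{n}(t+i-1)$, $p_i(t)=1$. *)

From Stdlib Require Import Reals.
From Coquelicot Require Import Coquelicot.
From mathcomp Require Import ssreflect ssrfun ssrbool eqtype ssrnat seq fintype bigop.

Set Implicit Arguments.
Unset Strict Implicit.

Local Open Scope R_scope.

(* Coordinates on P_n: inl i = alpha_i, inr i = p_i (0-indexed, i : 'I_n). *)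
Definition coord (n : nat) : finType := ('I_n + 'I_n)%type.
Definition pt (n : nat) := coord n -> R.

Definition alpha {n} (x : pt n) (i : 'I_n) : R := x (inl i).
Definition pp {n} (x : pt n) (i : 'I_n) : R := x (inr i).

Definition isucc {n} (i : 'I_n) : 'I_n := ordS i.
Definition ipred {n} (i : 'I_n) : 'I_n := ord_pred i.

(* d_i = alpha_{i+1} - alpha_i, where alpha_{n} := alpha_0 + 2 pi (total turning 2 pi) *)
Definition dal {n} (x : pt n) (i : 'I_n) : R :=
  alpha x (isucc i) - alpha x i + (if (val i).+1 == n then 2 * PI else 0).

(* vertex V_i = L_i /\ L_{i+1} *)
Definition vx {n} (x : pt n) (i : 'I_n) : R :=
  (pp x i * sin (alpha x (isucc i)) - pp x (isucc i) * sin (alpha x i)) / sin (dal x i).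
Definition vy {n} (x : pt n) (i : 'I_n) : R :=
  (pp x (isucc i) * cos (alpha x i) - pp x i * cos (alpha x (isucc i))) / sin (dal x i).

(* signed length of side i (from V_{i-1} to V_i, counterclockwise direction
   (-sin alpha_i, cos alpha_i)) *)
Definition sidelen {n} (x : pt n) (i : 'I_n) : R :=
  (vx x i - vx x (ipred i)) * (- sin (alpha x i))
  + (vy x i - vy x (ipred i)) * cos (alpha x i).

(* the coordinate domain P_n: consecutive outer normals turn by an angle in
   (0, pi), total turning 2 pi, and every side has positive length
   (so the lines are the sides of a convex n-gon in this cyclic order). *)
Definition in_Pn {n} (x : pt n) : Prop :=
  (forall i : 'I_n, 0 < dal x i < PI) /\ (forall i : 'I_n, 0 < sidelen x i).

Definition perimeter {n} (x : pt n) : R :=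
  \big[Rplus/0]_(i < n)
     sqrt ((vx x i - vx x (ipred i)) ^ 2 + (vy x i - vy x (ipred i)) ^ 2).

Definition in_Cn {n} (x : pt n) : Prop :=
  in_Pn x /\ perimeter x = 2 * INR n * tan (PI / INR n).

Definition Phi {n} (x : pt n) (i : 'I_n) : R :=
  let a := dal x (ipred i) in
  let b := dal x i in
  ((cos (a / 2)) ^ 2 * (pp x (isucc i) + pp x i)
     - (cos (b / 2)) ^ 2 * (pp x (ipred i) + pp x i))
  / (2 * sin ((a + b) / 2) * cos (a / 2) * cos (b / 2)).

Definition vfield (n : nat) := pt n -> pt n.

Definition xi {n} (i : 'I_n) : vfield n := fun x k =>
  match k with
  | inl j => if j == i then 1 else 0
  | inr j => if j == i then Phi x i else 0
  end.

Definition pd {n} (f : pt n -> R) (x : pt n) (j : coord n) : R :=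
  Derive (fun t => f (fun l => x l + (if l == j then t else 0))) 0.

Definition lie {n} (X Y : vfield n) : vfield n := fun x k =>
  \big[Rplus/0]_(j : coord n)
     (X x j * pd (fun y => Y y k) x j - Y x j * pd (fun y => X y k) x j).

(* T_x C_n = ker dF_x (directional derivative of the perimeter) *)
Definition tangentCn {n} (x : pt n) (v : pt n) : Prop :=
  Derive (fun t => perimeter (fun l => x l + t * v l)) 0 = 0.

Definition inD2 {n} (x : pt n) (v : pt n) : Prop :=
  exists (a : 'I_n -> R) (b : 'I_n -> 'I_n -> R), forall k : coord n,
    v k = \big[Rplus/0]_(i < n) (a i * xi i x k)
          + \big[Rplus/0]_(i < n) \big[Rplus/0]_(j < n) (b i j * lie (xi i) (xi j) x k).

(* gamma_0(t): alpha_i = 2 pi/n (t + i - 1) (1-indexed), p_i = 1 *)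
Definition gamma0 (n : nat) (t : R) : pt n := fun k =>
  match k with
  | inl i => 2 * PI / INR n * (t + INR (val i))
  | inr _ => 1
  end.

Definition open_pt {n} (U : pt n -> Prop) : Prop :=
  forall x, U x -> exists eps : R, 0 < eps /\
    forall y : pt n, (forall k, Rabs (y k - x k) < eps) -> U y.
Arguments gamma0 n t : clear implicits.

(* Write T_i = tan((alpha_{i+1} - alpha_i) / 2).  On convex polygons the perimeter is
   sum_i (p_i + p_{i+1}) T_i, so its differential is
     omega = sum_m (T_{m-1} + T_m) (dp_m - Phi_m dalpha_m),
   which vanishes on every xi_m.  A bracket [xi_i, xi_j] only has p-components, namely
   xi_i(Phi_j) at p_j and -xi_j(Phi_i) at p_i; it vanishes unless i and j are cyclically
   adjacent, and a direct computation gives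
     (T_{j-1} + T_j) xi_i(Phi_j) = (T_{i-1} + T_i) xi_j(Phi_i),
   i.e. omega also kills the brackets.  So D + [D, D] lies in ker omega = T C_n.
   Conversely, where every xi_i(Phi_{i+1}) is nonzero, a vector v of ker omega is the
   combination of the xi_i with coefficients v_alpha plus a combination of the n brackets
   [xi_i, xi_{i+1}] whose coefficients are partial sums of the terms of omega(v); the
   cyclic closing condition is exactly omega(v) = 0.  This nondegeneracy condition is
   open, and on the regular polygons xi_i(Phi_{i+1}) = (1 + T^2) / 2. *)

From Stdlib Require Import Reals Lra Psatz.
From Coquelicot Require Import Coquelicot.
From HB Require Import structures.
From mathcomp Require Import ssreflect ssrfun ssrbool eqtype ssrnat seq div fintype bigop zify.

Local Open Scope R_scope.

(** * Real sums over cyclic indices *)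

HB.instance Definition _ := Monoid.isComLaw.Build R 0 Rplus
  (fun x y z => esym (Rplus_assoc x y z)) Rplus_comm Rplus_0_l.
HB.instance Definition _ := Monoid.isMulLaw.Build R 0 Rmult Rmult_0_l Rmult_0_r.
HB.instance Definition _ :=
  Monoid.isAddLaw.Build R Rmult Rplus Rmult_plus_distr_r Rmult_plus_distr_l.

Notation "\sum_ ( i < n ) F" := (\big[Rplus/0]_(i < n) F) : R_scope.
Notation "\sum_ ( i < n | P ) F" := (\big[Rplus/0]_(i < n | P) F) : R_scope.

Definition b2R (b : bool) : R := if b then 1 else 0.

(* [bigD1] with [Rplus] as visible operator, so that [ring] can use the result. *)
Lemma bigD1_R {n} (j : 'I_n) (P : pred 'I_n) (F : 'I_n -> R) : P j ->
  \sum_(i < n | P i) F i = F j + \sum_(i < n | P i && (i != j)) F i.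
Proof. exact: bigD1. Qed.

Lemma big_Rminus (I : Type) (r : seq I) (P : pred I) (F G : I -> R) :
  \big[Rplus/0]_(i <- r | P i) (F i - G i) =
  \big[Rplus/0]_(i <- r | P i) F i - \big[Rplus/0]_(i <- r | P i) G i.
Proof. by rewrite big_split /= -(big_morph _ Ropp_plus_distr Ropp_0). Qed.

Lemma sum_b2R_eql {n} (j : 'I_n) (F : 'I_n -> R) : \sum_(i < n) (b2R (i == j) * F i) = F j.
Proof. by rewrite (bigD1_R j) // eqxx big1 => [|i /andP [_ /negbTE ->]]; rewrite /b2R; ring. Qed.

Lemma sum_b2R_eqr {n} (j : 'I_n) (F : 'I_n -> R) : \sum_(i < n) (b2R (j == i) * F i) = F j.
Proof. by rewrite -[RHS](sum_b2R_eql j); apply: eq_bigr => i _; rewrite eq_sym. Qed.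

Section CyclicIndex.
Context {n : nat}.
Implicit Types i : 'I_n.

Lemma ipredK : cancel (@ipred n) isucc. Proof. exact: ord_predK. Qed.
Lemma isuccK : cancel (@isucc n) ipred. Proof. exact: ordSK. Qed.

Lemma sum_isucc (F : 'I_n -> R) : \sum_(i < n) F (isucc i) = \sum_(i < n) F i.
Proof. by rewrite [RHS](reindex_inj (@ordS_inj n)). Qed.

Lemma sum_ipred (F : 'I_n -> R) : \sum_(i < n) F (ipred i) = \sum_(i < n) F i.
Proof. by rewrite [RHS](reindex_inj (@ord_pred_inj n)). Qed.

Lemma val_isucc i : (isucc i : nat) = if i.+1 == n then 0%N else i.+1.
Proof.
rewrite /isucc /ordS /=; case: eqP => [->|iSn]; first by rewrite modnn.
by rewrite modn_small //; have := ltn_ord i; lia.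
Qed.

Lemma isucc_neq i : (1 < n)%N -> isucc i != i.
Proof.
move=> n1; apply/eqP => /(congr1 (@nat_of_ord n)); rewrite val_isucc.
by have := ltn_ord i; case: ifP => /eqP; lia.
Qed.

Lemma isucc2_neq i : (2 < n)%N -> isucc (isucc i) != i.
Proof.
move=> n2; apply/eqP => /(congr1 (@nat_of_ord n)); rewrite !val_isucc.
by have := ltn_ord i; case: ifP => /eqP; case: ifP => /eqP; lia.
Qed.

Lemma ipred_neq_isucc i : (2 < n)%N -> ipred i != isucc i.
Proof. by move=> n2; apply: contraNneq (isucc2_neq i n2) => <-; rewrite ipredK. Qed.

Lemma isucc_eq_ipred i j : (isucc i == j) = (i == ipred j).
Proof. by apply/eqP/eqP => [<-|->]; rewrite ?isuccK ?ipredK. Qed.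

Lemma val_ipred (m : 'I_n) : (ipred m : nat) = if m == 0%N :> nat then n.-1 else m.-1.
Proof.
have := val_isucc (ipred m); rewrite ipredK.
by case: ifP => [/eqP E -> /=| _ ->]; [rewrite -[in RHS]E | ].
Qed.

Lemma prefix_sum_ipred (u : 'I_n -> R) (m : 'I_n) : \sum_(k < n) u k = 0 ->
  \sum_(k < n | (k <= m)%N) u k - \sum_(k < n | (k <= ipred m)%N) u k = u m.
Proof.
move=> u0; rewrite (bigD1_R m) //.
have [m0|m_pos] := eqVneq (m : nat) 0%N.
  have -> : \sum_(k < n | (k <= ipred m)%N) u k = \sum_(k < n) u k.
    by apply: eq_bigl => k; rewrite val_ipred m0 /=; have := ltn_ord k; lia.
  rewrite big1 ?u0 => [|k /andP [km /eqP]]; first ring.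
  by move=> kE; exfalso; apply: kE; apply: val_inj; move: km; rewrite /= m0; lia.
have -> : \sum_(k < n | (k <= ipred m)%N) u k = \sum_(k < n | (k <= m)%N && (k != m)) u k.
  by apply: eq_bigl => k; rewrite val_ipred -val_eqE /=; move: m_pos; case: ifP => /eqP; lia.
ring.
Qed.

End CyclicIndex.

(** * Continuity on the coordinate space *)

(* The uniform structure of uniform convergence: its balls are the sup-norm balls of [open_pt]. *)
Canonical pt_UniformSpace n := fct_UniformSpace (coord n) R_UniformSpace.

Lemma filter_forall_fin {T : Type} {F : (T -> Prop) -> Prop} {FF : Filter F}
    {I : finType} (P : I -> T -> Prop) :
  (forall i, F (P i)) -> F (fun y => forall i, P i y).
Proof.
move=> FP; suff : F (fun y => forall i, i \in enum I -> P i y).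
  by apply: filter_imp => y yP i; apply: yP; rewrite mem_enum.
elim: (enum I) => [|i s IHs]; first exact: filter_forall.
apply: filter_imp (filter_and _ _ (FP i) IHs) => y [Pi Ps] j.
by rewrite in_cons => /orP [/eqP ->|/Ps].
Qed.

Lemma filterlim_fct_fin {T : Type} {F : (T -> Prop) -> Prop} {FF : Filter F}
    {I : finType} (f : T -> I -> R) (g : I -> R) :
  (forall k, filterlim (fun t => f t k) F (locally (g k))) ->
  filterlim f F (@locally (fct_UniformSpace I R_UniformSpace) g).
Proof.
move=> fg P [eps gP]; apply: (filter_imp (fun t => ball g eps (f t))) => [t /gP //|].
apply: filter_forall_fin => k; apply: (fg k (ball (g k) eps)); exact: locally_ball.
Qed.

Section RealContinuity.
Context {T : UniformSpace} {x : T}.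
Implicit Types f g : T -> R.

Lemma continuous_Rplus f g :
  continuous f x -> continuous g x -> continuous (fun y => f y + g y) x.
Proof. exact: continuous_plus. Qed.

Lemma continuous_Rmult f g :
  continuous f x -> continuous g x -> continuous (fun y => f y * g y) x.
Proof. exact: continuous_mult. Qed.

Lemma continuous_Ropp f : continuous f x -> continuous (fun y => - f y) x.
Proof. exact: continuous_opp. Qed.

Lemma continuous_Rminus f g :
  continuous f x -> continuous g x -> continuous (fun y => f y - g y) x.
Proof. exact: continuous_minus. Qed.

Lemma continuous_Rdiv f g : g x <> 0 ->
  continuous f x -> continuous g x -> continuous (fun y => f y / g y) x.
Proof.
move=> gx0 cf cg; apply: continuous_Rmult cf _.
by apply: continuous_comp cg _; exact: continuous_Rinv.
Qed.

Lemma continuous_Rpow f m : continuous f x -> continuous (fun y => f y ^ m) x.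
Proof.
move=> cf; elim: m => [|m IHm] /=; [exact: continuous_const | exact: continuous_Rmult].
Qed.

Lemma continuous_Rsin f : continuous f x -> continuous (fun y => sin (f y)) x.
Proof. by move=> cf; apply: continuous_comp cf _; exact: continuous_sin. Qed.

Lemma continuous_Rcos f : continuous f x -> continuous (fun y => cos (f y)) x.
Proof. by move=> cf; apply: continuous_comp cf _; exact: continuous_cos. Qed.

Lemma continuous_locally f (P : R -> Prop) :
  continuous f x -> open P -> P (f x) -> locally x (fun y => P (f y)).
Proof. by move=> cf oP Pfx; apply: cf; exact: oP. Qed.

End RealContinuity.

Lemma continuous_coord {n} (k : coord n) (x : pt n) : continuous (fun y : pt n => y k) x.
Proof. by move=> P [eps epsP]; exists eps => y xy; apply: epsP; exact: xy. Qed.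

Ltac continuity_step :=
  match goal with
  | |- continuous (fun y => _ + _) _ => apply: continuous_Rplus
  | |- continuous (fun y => _ - _) _ => apply: continuous_Rminus
  | |- continuous (fun y => _ / _) _ => apply: continuous_Rdiv
  | |- continuous (fun y => _ * _) _ => apply: continuous_Rmult
  | |- continuous (fun y => - _) _ => apply: continuous_Ropp
  | |- continuous (fun y => _ ^ _) _ => apply: continuous_Rpow
  | |- continuous (fun y => sin _) _ => apply: continuous_Rsin
  | |- continuous (fun y => cos _) _ => apply: continuous_Rcos
  | |- continuous (fun y => y) _ => apply: continuous_id
  | |- continuous (fun y => y _) _ => apply: continuous_coord
  | |- continuous (fun y => _) _ => apply: continuous_const
  end.

Ltac continuity := repeat continuity_step.

Lemma open_pt_open {n} (U : pt n -> Prop) : open U -> open_pt U.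
Proof.
move=> oU x /oU [eps epsU]; exists eps; split; first exact: cond_pos.
by move=> y xy; apply: epsU => k; exact: xy.
Qed.

Definition line {n} (x v : pt n) (t : R) : pt n := fun l => x l + t * v l.

Lemma filterlim_line {n} (x v : pt n) : filterlim (line x v) (locally 0) (locally x).
Proof.
apply: filterlim_fct_fin => k.
have c : continuous (fun t : R => x k + t * v k) 0 by continuity.
by move: c; rewrite /continuous Rmult_0_l Rplus_0_r.
Qed.

(** * Half-angle tangents and the perimeter formula *)

Definition tan_half (d : R) : R := (1 - cos d) / sin d.

Lemma half_angle_param s c : s ^ 2 + c ^ 2 = 1 -> 0 < s ->
  let T := (1 - c) / s in
  [/\ c = (1 - T ^ 2) / (1 + T ^ 2), s = 2 * T / (1 + T ^ 2) & 0 < T].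
Proof.
move=> sc s0 T.
have s2 : s ^ 2 = (1 - c) * (1 + c) by lra.
have c1 : 0 < 1 - c by nra.
have T0 : 0 < T by apply: Rdiv_lt_0_compat.
have c2 : 0 < 1 + c by nra.
have T2 : T ^ 2 = (1 - c) / (1 + c).
  by rewrite /T; field_simplify_eq; [rewrite s2; ring | lra].
split=> //; rewrite T2; first by field; lra.
by apply: (Rmult_eq_reg_r s); [rewrite /T; field_simplify_eq; [nra | lra] | lra].
Qed.

Lemma tan_half_spec {d} : 0 < d < PI ->
  [/\ cos d = (1 - tan_half d ^ 2) / (1 + tan_half d ^ 2),
      sin d = 2 * tan_half d / (1 + tan_half d ^ 2) & 0 < tan_half d].
Proof.
move=> [d0 dpi]; apply: half_angle_param; last exact: sin_gt_0.
by have := sin2_cos2 d; rewrite /Rsqr; lra.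
Qed.

Section Polygon.
Context {n : nat}.
Implicit Types (x y v : pt n) (i : 'I_n).

Definition thalf x i : R := tan_half (dal x i).

Definition convex_turns x : Prop := forall i, 0 < dal x i < PI.

Lemma thalf_gt0 {x} : convex_turns x -> forall i, 0 < thalf x i.
Proof. by move=> cx i; have [] := tan_half_spec (cx i). Qed.

Lemma continuous_thalf {x} k : 0 < dal x k < PI -> continuous (fun y => thalf y k) x.
Proof.
move=> [d0 dpi]; have s0 := Rgt_not_eq _ _ (sin_gt_0 _ d0 dpi).
by rewrite /thalf /tan_half /dal /alpha; continuity.
Qed.

Lemma sin_dal_neq0 {x} : convex_turns x -> forall i, sin (dal x i) <> 0.
Proof. by move=> cx i; have [d0 dpi] := cx i; apply: Rgt_not_eq; exact: sin_gt_0. Qed.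

Lemma cos_dal y i :
  cos (dal y i) =
  cos (alpha y (isucc i)) * cos (alpha y i) + sin (alpha y (isucc i)) * sin (alpha y i).
Proof.
rewrite /dal -cos_minus; case: (_ == _); last by rewrite Rplus_0_r.
by rewrite cos_plus cos_2PI sin_2PI; ring.
Qed.

Lemma sin_dal y i :
  sin (dal y i) =
  sin (alpha y (isucc i)) * cos (alpha y i) - cos (alpha y (isucc i)) * sin (alpha y i).
Proof.
rewrite /dal -sin_minus; case: (_ == _); last by rewrite Rplus_0_r.
by rewrite sin_plus cos_2PI sin_2PI; ring.
Qed.

Lemma dal_line x v t i : dal (line x v t) i = dal x i + t * (v (inl (isucc i)) - v (inl i)).
Proof. by rewrite /dal /alpha /line; ring. Qed.

(* Signed distance, along a line at distance [p] from the origin, from the foot of the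
   perpendicular to the intersection with the line at distance [p'] whose normal is
   turned by [d]; every side is the sum of two such pieces. *)
Definition half_side (d p p' : R) : R := (p' - p * cos d) / sin d.

Lemma sidelen_half_sides y i : sin (dal y i) <> 0 -> sin (dal y (ipred i)) <> 0 ->
  sidelen y i = half_side (dal y i) (pp y i) (pp y (isucc i))
                + half_side (dal y (ipred i)) (pp y i) (pp y (ipred i)).
Proof.
rewrite /sidelen /vx /vy /half_side => s1 s0.
have sc : sin (alpha y i) ^ 2 + cos (alpha y i) ^ 2 = 1.
  by have := sin2_cos2 (alpha y i); rewrite /Rsqr; lra.
transitivity ((pp y (isucc i) * (sin (alpha y i) ^ 2 + cos (alpha y i) ^ 2)
                - pp y i * (cos (dal y i))) / sin (dal y i)
             + (pp y (ipred i) * (sin (alpha y i) ^ 2 + cos (alpha y i) ^ 2)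
                - pp y i * (cos (dal y (ipred i)))) / sin (dal y (ipred i))).
  move: s1 s0; rewrite !cos_dal !sin_dal !ipredK => s1 s0.
  by field; split.
by rewrite sc !Rmult_1_r !cos_dal !sin_dal !ipredK.
Qed.

Lemma side_length y i : sin (dal y i) <> 0 -> sin (dal y (ipred i)) <> 0 ->
  sqrt ((vx y i - vx y (ipred i)) ^ 2 + (vy y i - vy y (ipred i)) ^ 2) = Rabs (sidelen y i).
Proof.
move=> s1 s0; rewrite -sqrt_Rsqr_abs; congr sqrt.
move: s1 s0; rewrite /sidelen /vx /vy !sin_dal !ipredK /Rsqr => s1 s0.
set dx := _ - _; set dy := _ - _.
have sc : sin (alpha y i) ^ 2 + cos (alpha y i) ^ 2 = 1.
  by have := sin2_cos2 (alpha y i); rewrite /Rsqr; lra.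
(* the side is orthogonal to the outer normal *)
have normal0 : dx * cos (alpha y i) + dy * sin (alpha y i) = 0 by rewrite /dx /dy; field; split.
transitivity ((dx ^ 2 + dy ^ 2) * (sin (alpha y i) ^ 2 + cos (alpha y i) ^ 2)).
  by rewrite sc; ring.
have -> : (dx ^ 2 + dy ^ 2) * (sin (alpha y i) ^ 2 + cos (alpha y i) ^ 2)
  = (dx * cos (alpha y i) + dy * sin (alpha y i)) ^ 2
    + (dx * - sin (alpha y i) + dy * cos (alpha y i)) ^ 2 by ring.
by rewrite normal0; ring.
Qed.

Lemma perimeter_tan_half y : (forall i, sin (dal y i) <> 0 /\ 0 <= sidelen y i) ->
  perimeter y = \sum_(i < n) (pp y i + pp y (isucc i)) * thalf y i.
Proof.
move=> hy; rewrite /perimeter; transitivity (\sum_(i < n)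
  (half_side (dal y i) (pp y i) (pp y (isucc i))
   + half_side (dal y (ipred i)) (pp y i) (pp y (ipred i)))).
  apply: eq_bigr => i _; have [s1 l1] := hy i; have [s0 _] := hy (ipred i).
  by rewrite side_length // Rabs_pos_eq // sidelen_half_sides.
rewrite big_split /= -(sum_isucc (fun i => half_side (dal y (ipred i)) (pp y i) (pp y (ipred i)))).
rewrite -big_split /=; apply: eq_bigr => i _.
by rewrite isuccK /half_side /thalf /tan_half; field; exact: (hy i).1.
Qed.

End Polygon.

Lemma is_derive_big {I : Type} (r : seq I) (P : pred I) (f : I -> R -> R) (df : I -> R) t :
  (forall i, P i -> is_derive (f i) t (df i)) ->
  is_derive (fun s => \big[Rplus/0]_(i <- r | P i) f i s) t (\big[Rplus/0]_(i <- r | P i) df i).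
Proof.
move=> fdf; elim: r => [|i r IHr].
  by rewrite big_nil; apply: is_derive_ext (is_derive_const 0 t) => s; rewrite big_nil.
rewrite big_cons; case Pi: (P i).
  by apply: is_derive_ext (is_derive_plus _ _ _ _ _ (fdf i Pi) IHr) => s; rewrite big_cons Pi.
by apply: is_derive_ext IHr => s; rewrite big_cons Pi.
Qed.

Lemma is_derive_perimeter_term d a p p' w w' : 0 < d < PI ->
  is_derive (fun t => (p + t * w + (p' + t * w')) * tan_half (d + t * a)) 0
    ((w + w') * tan_half d + (p + p') * a * (1 + tan_half d ^ 2) / 2).
Proof.
move=> /tan_half_spec []; set T := tan_half d; clearbody T => cd sd T0.
rewrite /tan_half; auto_derive.
  by rewrite Rmult_0_l Rplus_0_r sd; apply: Rgt_not_eq; apply: Rdiv_lt_0_compat; nra.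
by rewrite !Rmult_0_l !Rplus_0_r cd sd; field; nra.
Qed.

(** * The differential of the perimeter *)

Definition Phi_trig (ca sa cb sb q0 q1 q2 : R) : R :=
  ((1 + ca) / 2 * (q2 + q1) - (1 + cb) / 2 * (q0 + q1)) / ((sa * (1 + cb) + sb * (1 + ca)) / 2).

Definition Phi_rat (ta tb q0 q1 q2 : R) : R :=
  ((q2 + q1) * (1 + tb ^ 2) - (q0 + q1) * (1 + ta ^ 2)) / (2 * (ta + tb)).

Lemma Phi_trig_rat ta tb q0 q1 q2 : 0 < ta -> 0 < tb ->
  Phi_trig ((1 - ta ^ 2) / (1 + ta ^ 2)) (2 * ta / (1 + ta ^ 2))
           ((1 - tb ^ 2) / (1 + tb ^ 2)) (2 * tb / (1 + tb ^ 2)) q0 q1 q2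
  = Phi_rat ta tb q0 q1 q2.
Proof. by move=> ta0 tb0; rewrite /Phi_trig /Phi_rat; field; repeat split; nra. Qed.

Lemma cos_half_sqr a : cos (a / 2) ^ 2 = (1 + cos a) / 2.
Proof. by have := cos_2a_cos (a / 2); rewrite (_ : 2 * (a / 2) = a); [lra | field]. Qed.

Lemma sin_half_sum a b : 2 * sin ((a + b) / 2) * cos (a / 2) * cos (b / 2) =
  (sin a * (1 + cos b) + sin b * (1 + cos a)) / 2.
Proof.
have sa := sin_2a (a / 2); have sb := sin_2a (b / 2).
have ca := cos_2a_cos (a / 2); have cb := cos_2a_cos (b / 2).
replace (2 * (a / 2)) with a in sa, ca by field.
replace (2 * (b / 2)) with b in sb, cb by field.
replace ((a + b) / 2) with (a / 2 + b / 2) by field.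
by rewrite sin_plus sa sb ca cb; field.
Qed.

Section PhiCoordinates.
Context {n : nat}.
Implicit Types (x y v : pt n) (i m : 'I_n).

Lemma Phi_eq_trig y i : Phi y i =
  Phi_trig (cos (dal y (ipred i))) (sin (dal y (ipred i))) (cos (dal y i)) (sin (dal y i))
           (pp y (ipred i)) (pp y i) (pp y (isucc i)).
Proof. by rewrite /Phi /Phi_trig !cos_half_sqr sin_half_sum. Qed.

Lemma Phi_eq_rat {x} : convex_turns x -> forall i,
  Phi x i = Phi_rat (thalf x (ipred i)) (thalf x i) (pp x (ipred i)) (pp x i) (pp x (isucc i)).
Proof.
move=> cx i; have [c0 s0 t0] := tan_half_spec (cx (ipred i)).
have [c1 s1 t1] := tan_half_spec (cx i).
by rewrite Phi_eq_trig c0 s0 c1 s1 Phi_trig_rat.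
Qed.

Definition weight x m : R := thalf x (ipred m) + thalf x m.

Lemma weight_gt0 {x} : convex_turns x -> forall m, 0 < weight x m.
Proof.
by move=> cx m; have := thalf_gt0 cx (ipred m); have := thalf_gt0 cx m; rewrite /weight; lra.
Qed.

(* The differential of the perimeter at [x] (see [tangentCn_iff]). *)
Definition perimeter_form x v : R :=
  \sum_(m < n) weight x m * (v (inr m) - Phi x m * v (inl m)).

End PhiCoordinates.

Section PerimeterDifferential.
Context {n : nat}.
Implicit Types (x y v : pt n) (i m : 'I_n).

Lemma perimeter_form_regroup x v : convex_turns x ->
  \sum_(i < n) ((v (inr i) + v (inr (isucc i))) * thalf x i
     + (pp x i + pp x (isucc i)) * (v (inl (isucc i)) - v (inl i)) * (1 + thalf x i ^ 2) / 2)
  = perimeter_form x v.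
Proof.
move=> cx; pose w i := (pp x i + pp x (isucc i)) * (1 + thalf x i ^ 2) / 2.
pose here i := v (inr i) * thalf x i - w i * v (inl i).
pose next i := v (inr (isucc i)) * thalf x i + w i * v (inl (isucc i)).
transitivity (\sum_(i < n) (here i + next i)).
  by apply: eq_bigr => i _; rewrite /here /next /w; field.
rewrite big_split /= -(sum_ipred next) -big_split /=; apply: eq_bigr => m _.
rewrite /here /next /w ipredK (Phi_eq_rat cx m) /Phi_rat.
have := thalf_gt0 cx m; have := thalf_gt0 cx (ipred m); rewrite /weight => t0 t1.
by field; lra.
Qed.

Lemma locally_perimeter_tan_half {x} : in_Pn x ->
  locally x (fun y => forall i, sin (dal y i) <> 0 /\ 0 <= sidelen y i).
Proof.
move=> [cx side_pos]; apply: filter_forall_fin => i.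
have s0 := sin_dal_neq0 cx (ipred i); have s1 := sin_dal_neq0 cx i.
apply: filter_and.
  apply: (@continuous_locally _ x (fun y => sin (dal y i)) (fun r => r <> 0));
    [|exact: open_neq|exact: s1].
  by rewrite /dal /alpha; continuity.
apply: filter_imp (@continuous_locally _ x (fun y => sidelen y i) _ _ (open_gt 0) (side_pos i)).
  by move=> y; apply: Rlt_le.
by rewrite /sidelen /vx /vy /dal /pp /alpha; continuity.
Qed.

Lemma is_derive_perimeter_line {x} v : in_Pn x ->
  is_derive (fun t => perimeter (line x v t)) 0 (perimeter_form x v).
Proof.
move=> Px; have cx : convex_turns x := Px.1.
rewrite -perimeter_form_regroup //.
apply: (is_derive_ext_loc (fun t => \sum_(i < n)
  (pp x i + t * v (inr i) + (pp x (isucc i) + t * v (inr (isucc i))))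
  * tan_half (dal x i + t * (v (inl (isucc i)) - v (inl i))))).
  have near : locally 0 (fun t => forall i,
      sin (dal (line x v t) i) <> 0 /\ 0 <= sidelen (line x v t) i).
    exact: filterlim_line x v _ (locally_perimeter_tan_half Px).
  apply: filter_imp near => t near_t.
  by rewrite perimeter_tan_half //; apply: eq_bigr => i _; rewrite /thalf dal_line.
by apply: is_derive_big => i _; exact: is_derive_perimeter_term.
Qed.

Lemma tangentCn_iff {x} v : in_Pn x -> tangentCn x v <-> perimeter_form x v = 0.
Proof.
by move=> Px; rewrite /tangentCn (is_derive_unique _ _ _ (is_derive_perimeter_line v Px)).
Qed.

End PerimeterDifferential.

(** * Partial derivatives of Phi and brackets of the xi *)

(* Partial derivatives of [Phi_trig] with respect to the two angle gaps and the three
   distances, written in the half-angle tangents (d tan(d/2) / dd = (1 + tan(d/2)^2) / 2). *)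
Definition dPhi_dgap1 ta tb q0 q1 q2 : R :=
  (- (q0 + q1) * 2 * ta * (ta + tb) - ((q2 + q1) * (1 + tb ^ 2) - (q0 + q1) * (1 + ta ^ 2)))
  / (2 * (ta + tb) ^ 2) * ((1 + ta ^ 2) / 2).
Definition dPhi_dgap2 ta tb q0 q1 q2 : R :=
  ((q2 + q1) * 2 * tb * (ta + tb) - ((q2 + q1) * (1 + tb ^ 2) - (q0 + q1) * (1 + ta ^ 2)))
  / (2 * (ta + tb) ^ 2) * ((1 + tb ^ 2) / 2).
Definition dPhi_dq0 ta tb : R := - (1 + ta ^ 2) / (2 * (ta + tb)).
Definition dPhi_dq1 ta tb : R := (tb ^ 2 - ta ^ 2) / (2 * (ta + tb)).
Definition dPhi_dq2 ta tb : R := (1 + tb ^ 2) / (2 * (ta + tb)).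

Lemma is_derive_Phi_trig {A B} a b q0 q1 q2 r0 r1 r2 : 0 < A < PI -> 0 < B < PI ->
  is_derive (fun t => Phi_trig (cos (A + t * a)) (sin (A + t * a)) (cos (B + t * b))
                               (sin (B + t * b)) (q0 + t * r0) (q1 + t * r1) (q2 + t * r2)) 0
    (a * dPhi_dgap1 (tan_half A) (tan_half B) q0 q1 q2
     + b * dPhi_dgap2 (tan_half A) (tan_half B) q0 q1 q2
     + r0 * dPhi_dq0 (tan_half A) (tan_half B) + r1 * dPhi_dq1 (tan_half A) (tan_half B)
     + r2 * dPhi_dq2 (tan_half A) (tan_half B)).
Proof.
move=> /tan_half_spec [cA sA ta0] /tan_half_spec [cB sB tb0].
move: (tan_half A) (tan_half B) cA sA ta0 cB sB tb0 => ta tb cA sA ta0 cB sB tb0.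
rewrite /Phi_trig; auto_derive; rewrite !Rmult_0_l !Rplus_0_r cA sA cB sB.
  have half_cos u : 0 < 1 + (1 - u ^ 2) / (1 + u ^ 2).
    by rewrite (_ : 1 + _ = 2 / (1 + u ^ 2)); [apply: Rdiv_lt_0_compat | field]; nra.
  have half_sin u : 0 < u -> 0 < 2 * u / (1 + u ^ 2).
    by move=> u0; apply: Rdiv_lt_0_compat; nra.
  apply: Rgt_not_eq; apply: Rmult_lt_0_compat; last lra.
  by apply: Rplus_lt_0_compat; apply: Rmult_lt_0_compat; auto.
by rewrite /dPhi_dgap1 /dPhi_dgap2 /dPhi_dq0 /dPhi_dq1 /dPhi_dq2; field; repeat split; nra.
Qed.

Section PartialDerivatives.
Context {n : nat}.
Implicit Types (x y : pt n) (i j m : 'I_n).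

(* [pd f x l] is the derivative at [0] of [fun t => f (shift x l t)]. *)
Definition shift x (l : coord n) (t : R) : pt n := fun k => x k + (if k == l then t else 0).

Lemma dal_shift_inl x i t m :
  dal (shift x (inl i) t) m = dal x m + t * (b2R (isucc m == i) - b2R (m == i)).
Proof.
rewrite /dal /alpha /shift /b2R /=.
have inlE (a b : 'I_n) : (inl a == inl b :> coord n) = (a == b) by apply/eqP/eqP => [[]|->].
by rewrite !inlE; case: (_ == i); case: (_ == i); ring.
Qed.

Lemma pp_shift_inl x i t m : pp (shift x (inl i) t) m = pp x m + t * 0.
Proof. by rewrite /pp /shift /=; ring. Qed.

Lemma dal_shift_inr x i t m : dal (shift x (inr i) t) m = dal x m + t * 0.
Proof. by rewrite /dal /alpha /shift /=; ring. Qed.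

Lemma pp_shift_inr x i t m : pp (shift x (inr i) t) m = pp x m + t * b2R (m == i).
Proof.
rewrite /pp /shift /b2R /=.
have inrE (a b : 'I_n) : (inr a == inr b :> coord n) = (a == b) by apply/eqP/eqP => [[]|->].
by rewrite inrE; case: (_ == i); ring.
Qed.

Lemma pd_Phi_inl {x} : convex_turns x -> forall j i,
  pd (fun y => Phi y j) x (inl i) =
  (b2R (j == i) - b2R (ipred j == i))
    * dPhi_dgap1 (thalf x (ipred j)) (thalf x j) (pp x (ipred j)) (pp x j) (pp x (isucc j))
  + (b2R (isucc j == i) - b2R (j == i))
    * dPhi_dgap2 (thalf x (ipred j)) (thalf x j) (pp x (ipred j)) (pp x j) (pp x (isucc j)).
Proof.
move=> cx j i; apply: is_derive_unique.
have := is_derive_Phi_trig (b2R (j == i) - b2R (ipred j == i)) (b2R (isucc j == i) - b2R (j == i))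
  (pp x (ipred j)) (pp x j) (pp x (isucc j)) 0 0 0 (cx (ipred j)) (cx j).
rewrite !Rmult_0_l !Rplus_0_r; apply: is_derive_ext => t.
by rewrite (Phi_eq_trig _ j) !dal_shift_inl !pp_shift_inl ipredK.
Qed.

Lemma pd_Phi_inr {x} : convex_turns x -> forall j i,
  pd (fun y => Phi y j) x (inr i) =
  b2R (ipred j == i) * dPhi_dq0 (thalf x (ipred j)) (thalf x j)
  + b2R (j == i) * dPhi_dq1 (thalf x (ipred j)) (thalf x j)
  + b2R (isucc j == i) * dPhi_dq2 (thalf x (ipred j)) (thalf x j).
Proof.
move=> cx j i; apply: is_derive_unique.
have := is_derive_Phi_trig 0 0 (pp x (ipred j)) (pp x j) (pp x (isucc j))
  (b2R (ipred j == i)) (b2R (j == i)) (b2R (isucc j == i)) (cx (ipred j)) (cx j).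
rewrite !Rmult_0_l !Rplus_0_l; apply: is_derive_ext => t.
by rewrite (Phi_eq_trig _ j) !dal_shift_inr !pp_shift_inr.
Qed.

End PartialDerivatives.

Section Brackets.
Context {n : nat}.
Implicit Types (x y : pt n) (i j m : 'I_n).

Definition xi_Phi x i j : R :=
  pd (fun y => Phi y j) x (inl i) + Phi x i * pd (fun y => Phi y j) x (inr i).

Lemma pd_const (f : pt n -> R) c x l : (forall y, f y = c) -> pd f x l = 0.
Proof. by move=> fc; rewrite /pd (Derive_ext _ (fun=> c)) ?Derive_const. Qed.

Lemma pd_xi_inl j m x l : pd (fun y => xi j y (inl m)) x l = 0.
Proof. exact: (pd_const _ (if m == j then 1 else 0)). Qed.

Lemma pd_xi_inr j m x l :
  pd (fun y => xi j y (inr m)) x l = b2R (m == j) * pd (fun y => Phi y j) x l.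
Proof.
rewrite /xi /b2R; case: (m == j); first by rewrite Rmult_1_l.
by rewrite Rmult_0_l; apply: (pd_const _ 0).
Qed.

Lemma xi_inl i x l : xi i x (inl l) = b2R (l == i).
Proof. by []. Qed.

Lemma xi_inr i x l : xi i x (inr l) = b2R (l == i) * Phi x i.
Proof. by rewrite /xi /b2R; case: (l == i); ring. Qed.

Lemma sum_coord (F : coord n -> R) :
  \big[Rplus/0]_(l : coord n) F l = \sum_(l < n) F (inl l) + \sum_(l < n) F (inr l).
Proof. exact: big_sumType. Qed.

Lemma lie_xi_inl i j x m : lie (xi i) (xi j) x (inl m) = 0.
Proof. by apply: big1 => l _; rewrite !pd_xi_inl; ring. Qed.

Lemma lie_xi_inr i j x m :
  lie (xi i) (xi j) x (inr m) = b2R (m == j) * xi_Phi x i j - b2R (m == i) * xi_Phi x j i.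
Proof.
rewrite /lie sum_coord.
under eq_bigr => l _ do rewrite !xi_inl !pd_xi_inr.
under [X in _ _ X = _]eq_bigr => l _ do rewrite !xi_inr !pd_xi_inr.
(* opaque names, so that [Rmult_assoc] cannot unfold [Phi] *)
rewrite /xi_Phi; move: (Phi x i) (Phi x j) => Phi_i Phi_j.
under [X in _ _ X = _]eq_bigr => l _ do rewrite !Rmult_assoc.
by rewrite !big_Rminus !sum_b2R_eql; ring.
Qed.

End Brackets.

Section BracketSymmetry.
Context {n : nat}.
Hypothesis n_gt2 : (2 < n)%N.
Implicit Types (x : pt n) (i j : 'I_n).

Definition xi_Phi_succ_rat x i : R :=
  - dPhi_dgap1 (thalf x i) (thalf x (isucc i)) (pp x i) (pp x (isucc i)) (pp x (isucc (isucc i)))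
  + Phi_rat (thalf x (ipred i)) (thalf x i) (pp x (ipred i)) (pp x i) (pp x (isucc i))
    * dPhi_dq0 (thalf x i) (thalf x (isucc i)).

Lemma xi_Phi_isucc {x} : convex_turns x -> forall i, xi_Phi x i (isucc i) = xi_Phi_succ_rat x i.
Proof.
move=> cx i; rewrite /xi_Phi pd_Phi_inl // pd_Phi_inr // (Phi_eq_rat cx i) isuccK.
rewrite (negbTE (isucc_neq i (ltnW n_gt2))) (negbTE (isucc2_neq i n_gt2)) eqxx /b2R.
by rewrite /xi_Phi_succ_rat; ring.
Qed.

Lemma xi_Phi_ipred {x} : convex_turns x -> forall i,
  xi_Phi x (isucc i) i =
  dPhi_dgap2 (thalf x (ipred i)) (thalf x i) (pp x (ipred i)) (pp x i) (pp x (isucc i))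
  + Phi_rat (thalf x i) (thalf x (isucc i)) (pp x i) (pp x (isucc i)) (pp x (isucc (isucc i)))
    * dPhi_dq2 (thalf x (ipred i)) (thalf x i).
Proof.
move=> cx i; rewrite /xi_Phi pd_Phi_inl // pd_Phi_inr // (Phi_eq_rat cx (isucc i)) isuccK.
rewrite eq_sym (negbTE (isucc_neq i (ltnW n_gt2))) eq_sym.
by rewrite [isucc i == _]eq_sym (negbTE (ipred_neq_isucc i n_gt2)) eqxx /b2R; ring.
Qed.

Lemma xi_Phi_far {x} : convex_turns x -> forall i j,
  i != j -> i != isucc j -> j != isucc i -> xi_Phi x i j = 0.
Proof.
move=> cx i j ij i_sj j_si; rewrite /xi_Phi pd_Phi_inl // pd_Phi_inr //.
have -> : (j == i) = false by rewrite eq_sym (negbTE ij).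
have -> : (isucc j == i) = false by rewrite eq_sym (negbTE i_sj).
have -> : (ipred j == i) = false by rewrite eq_sym -isucc_eq_ipred eq_sym (negbTE j_si).
by rewrite /b2R; ring.
Qed.

Lemma weight_xi_Phi_isucc {x} : convex_turns x -> forall i,
  weight x (isucc i) * xi_Phi x i (isucc i) = weight x i * xi_Phi x (isucc i) i.
Proof.
move=> cx i; rewrite xi_Phi_isucc // xi_Phi_ipred // /weight /xi_Phi_succ_rat isuccK.
have := thalf_gt0 cx (ipred i); have := thalf_gt0 cx i; have := thalf_gt0 cx (isucc i).
move: (thalf x (ipred i)) (thalf x i) (thalf x (isucc i)) => t0 t1 t2 t2_0 t1_0 t0_0.
rewrite /dPhi_dgap1 /dPhi_dgap2 /dPhi_dq0 /dPhi_dq2 /Phi_rat.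
by field; lra.
Qed.

(* Equivalently: the differential of the perimeter annihilates [[xi_i, xi_j]]. *)
Lemma weight_xi_Phi_sym {x} : convex_turns x -> forall i j,
  weight x j * xi_Phi x i j = weight x i * xi_Phi x j i.
Proof.
move=> cx i j; have [<-|ij] := eqVneq i j; first by [].
have [->|j_si] := eqVneq j (isucc i); first exact: weight_xi_Phi_isucc.
have [->|i_sj] := eqVneq i (isucc j); first by rewrite weight_xi_Phi_isucc.
have ji : j != i by rewrite eq_sym.
by rewrite (xi_Phi_far cx _ _ ij i_sj j_si) (xi_Phi_far cx _ _ ji j_si i_sj) !Rmult_0_r.
Qed.

End BracketSymmetry.

(** * The span of the xi and their brackets *)

Section Span.
Context {n : nat}.
Hypothesis n_gt2 : (2 < n)%N.
Implicit Types (x v : pt n) (a : 'I_n -> R) (b : 'I_n -> 'I_n -> R).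

Lemma xi_comb_inl a x m : \sum_(i < n) (a i * xi i x (inl m)) = a m.
Proof. by rewrite -[RHS](sum_b2R_eqr m); apply: eq_bigr => i _; rewrite xi_inl Rmult_comm. Qed.

Lemma xi_comb_inr a x m : \sum_(i < n) (a i * xi i x (inr m)) = a m * Phi x m.
Proof.
rewrite -[RHS](sum_b2R_eqr m (fun i => a i * Phi x i)); apply: eq_bigr => i _.
by rewrite xi_inr /b2R eq_sym; case: (_ == _); ring.
Qed.

Lemma bracket_comb_inl b x m : \sum_(i < n) \sum_(j < n) (b i j * lie (xi i) (xi j) x (inl m)) = 0.
Proof. by apply: big1 => i _; apply: big1 => j _; rewrite lie_xi_inl Rmult_0_r. Qed.

Lemma perimeter_form_brackets {x} b : convex_turns x ->
  \sum_(m < n) weight x m * \sum_(i < n) \sum_(j < n) (b i j * lie (xi i) (xi j) x (inr m)) = 0.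
Proof.
move=> cx.
under eq_bigr => m _ do rewrite big_distrr.
under eq_bigr => m _ do under eq_bigr => i _ do rewrite big_distrr.
rewrite exchange_big; apply: big1 => i _ /=; rewrite exchange_big; apply: big1 => j _ /=.
transitivity (\sum_(m < n) (b2R (m == j) * (b i j * (weight x m * xi_Phi x i j))
                           - b2R (m == i) * (b i j * (weight x m * xi_Phi x j i)))).
  by apply: eq_bigr => m _; rewrite lie_xi_inr; ring.
by rewrite big_Rminus !sum_b2R_eql (weight_xi_Phi_sym n_gt2 cx); ring.
Qed.

Lemma inD2_perimeter_form {x} v : convex_turns x -> inD2 x v -> perimeter_form x v = 0.
Proof.
move=> cx [a [b vE]].
have va m : v (inl m) = a m by rewrite vE xi_comb_inl bracket_comb_inl Rplus_0_r.
rewrite -(perimeter_form_brackets b cx); apply: eq_bigr => m _; congr (_ * _).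
by rewrite vE xi_comb_inr va; ring.
Qed.

Lemma bracket_chain_inr (beta : 'I_n -> R) x m :
  \sum_(i < n) \sum_(j < n) ((if j == isucc i then beta i else 0) * lie (xi i) (xi j) x (inr m))
  = beta (ipred m) * xi_Phi x (ipred m) m - beta m * xi_Phi x (isucc m) m.
Proof.
transitivity (\sum_(i < n) (b2R (i == ipred m) * (beta i * xi_Phi x i (isucc i))
                           - b2R (i == m) * (beta i * xi_Phi x (isucc i) i))).
  apply: eq_bigr => i _; rewrite (bigD1_R (isucc i)) // eqxx big1 => [|j /andP [_ /negbTE ->]].
    rewrite lie_xi_inr eq_sym isucc_eq_ipred [m == i]eq_sym /b2R.
    by case: (i == m); case: (i == ipred m); ring.
  by rewrite Rmult_0_l.
by rewrite big_Rminus !sum_b2R_eql ipredK.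
Qed.

Lemma perimeter_form_inD2 {x} v : convex_turns x -> (forall i, xi_Phi x i (isucc i) <> 0) ->
  perimeter_form x v = 0 -> inD2 x v.
Proof.
move=> cx X0 dF0.
pose u m := weight x m * (v (inr m) - Phi x m * v (inl m)).
pose S (i : 'I_n) := \sum_(k < n | (k <= i)%N) u k.
pose beta (i : 'I_n) := - S i / (weight x (isucc i) * xi_Phi x i (isucc i)).
exists (fun i => v (inl i)), (fun i j => if j == isucc i then beta i else 0).
case=> m; first by rewrite xi_comb_inl bracket_comb_inl Rplus_0_r.
rewrite xi_comb_inr bracket_chain_inr /beta ipredK (weight_xi_Phi_isucc n_gt2 cx m).
have dS : S m - S (ipred m) = u m by exact: prefix_sum_ipred.
have w0 := weight_gt0 cx m; have w1 := weight_gt0 cx (isucc m).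
have X1 := X0 (ipred m); rewrite ipredK in X1.
have X2 : xi_Phi x (isucc m) m <> 0.
  move=> X2; apply: (X0 m); apply: (Rmult_eq_reg_l (weight x (isucc m))); last lra.
  by rewrite weight_xi_Phi_isucc // X2; ring.
move: dS; rewrite /u; move: (S m) (S (ipred m)) => Sm Sp dS.
rewrite (_ : Sm = Sp + (Sm - Sp)); last by ring.
rewrite dS; move: (v (inr m)) (v (inl m)) (Phi x m) (weight x m) w0 => vp va Phm wm w0.
by field; repeat split => //; lra.
Qed.

End Span.

(** * The neighbourhood of the regular polygons *)

Section Neighbourhood.
Context {n : nat}.
Implicit Types (x : pt n).

(* Stated with the closed form [xi_Phi_succ_rat] of [xi_Phi x i (isucc i)], whose
   continuity in [x] is available, unlike that of the partial derivatives in [xi_Phi]. *)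
Definition brackets_nondegenerate x : Prop :=
  forall i, 0 < dal x i < PI /\ xi_Phi_succ_rat x i <> 0.

Lemma continuous_xi_Phi_succ_rat {x} : convex_turns x -> forall i,
  continuous (fun y => xi_Phi_succ_rat y i) x.
Proof.
move=> cx i; rewrite /xi_Phi_succ_rat /dPhi_dgap1 /Phi_rat /dPhi_dq0 /pp.
repeat first [apply: continuous_thalf; exact: cx | continuity_step].
all: have := thalf_gt0 cx (ipred i); have := thalf_gt0 cx i; have := thalf_gt0 cx (isucc i).
all: by move=> *; apply: Rgt_not_eq; nra.
Qed.

Lemma open_brackets_nondegenerate : open brackets_nondegenerate.
Proof.
move=> x gx; have cx : convex_turns x by move=> i; exact: (gx i).1.
apply: filter_forall_fin => i; apply: filter_and.
  apply: (@continuous_locally _ x (fun y => dal y i) (fun d => 0 < d < PI)).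
  - by rewrite /dal /alpha; continuity.
  - by apply: open_and; [exact: open_gt | exact: open_lt].
  - exact: (gx i).1.
apply: (@continuous_locally _ x (fun y => xi_Phi_succ_rat y i) (fun r => r <> 0)).
- exact: continuous_xi_Phi_succ_rat.
- exact: open_neq.
- exact: (gx i).2.
Qed.

End Neighbourhood.

Section RegularPolygons.
Context {n : nat}.
Hypothesis n_gt2 : (2 < n)%N.

Lemma INR_ge3 : 3 <= INR n.
Proof. by have := le_INR 3 n (elimT leP n_gt2); rewrite /=; lra. Qed.

Lemma dal_gamma0 t i : dal (gamma0 n t) i = 2 * PI / INR n.
Proof.
have n3 := INR_ge3.
rewrite /dal /alpha /=; case: eqP => [iS|iS].
  rewrite iS modnn (_ : INR i = INR n - 1); last by rewrite -[in RHS]iS S_INR; ring.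
  by rewrite /=; field; lra.
rewrite modn_small; first by rewrite S_INR; field; lra.
by have := ltn_ord i; lia.
Qed.

Lemma gamma0_convex t : convex_turns (gamma0 n t).
Proof.
have n3 := INR_ge3.
move=> i; rewrite dal_gamma0; have := PI_RGT_0; split.
  by apply: Rdiv_lt_0_compat; lra.
by apply: (Rmult_lt_reg_r (INR n)); [lra | rewrite /Rdiv Rmult_assoc Rinv_l; nra].
Qed.

Lemma gamma0_brackets_nondegenerate t : brackets_nondegenerate (gamma0 n t).
Proof.
move=> i; split; first exact: gamma0_convex.
have cx := gamma0_convex t.
have thalfE k : thalf (gamma0 n t) k = thalf (gamma0 n t) i by rewrite /thalf !dal_gamma0.
have T0 := thalf_gt0 cx i.
rewrite /xi_Phi_succ_rat !thalfE /pp /=.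
move: (thalf (gamma0 n t) i) T0 => T T0.
rewrite /dPhi_dgap1 /Phi_rat /dPhi_dq0.
rewrite (_ : _ + _ = (1 + T ^ 2) / 2); last by field; lra.
by apply: Rgt_not_eq; nra.
Qed.

End RegularPolygons.

Theorem mainTheorem9 (n : nat) (hn : (3 <= n)%N) :
  exists U : pt n -> Prop,
    open_pt U /\
    (forall t : R, (0 <= t <= 1)%R -> U (gamma0 n t)) /\
    (forall x : pt n, U x -> in_Cn x ->
       forall v : pt n, inD2 x v <-> tangentCn x v).
Proof.
exists brackets_nondegenerate; split; first exact: open_pt_open open_brackets_nondegenerate.
split=> [t _|x gx [Px _] v]; first exact: gamma0_brackets_nondegenerate.
have cx : convex_turns x by move=> i; exact: (gx i).1.
rewrite tangentCn_iff //; split; first exact: inD2_perimeter_form.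
apply: perimeter_form_inD2 => // i.
by rewrite xi_Phi_isucc //; exact: (gx i).2.
Qed.
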